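(* The measure space \((\mathbb{R}^{\mathbb{N}},\mu)\) is not semi-finite.
   Context: Let $\mathcal{B}$ be the Borel $\sigma$-algebra of $\mathbb{R}$, $\lambda$ the Lebesgue measure, and $\mathcal{B}_{\infty}$ the $\sigma$-algebra on $\mathbb{R}^{\mathbb{N}}$ generated by the cylinder sets $\prod_{i=1}^{m}C_{i}\times\prod_{i=m+1}^{\infty}\mathbb{R}$ with $C_i\in\mathcal{B}$, $m\in\mathbb{N}$. Let $\mathcal{F}(\mathcal{B},\lambda)$ be the set of finite rectangles $\prod_{i\in\mathbb{N}}C_{i}$ with $C_i\in\mathcal{B}$ and $\prod_{i}\lambda(C_i)\in[0,\infty)$, with $\mathrm{vol}(\prod_{i}C_i):=\prod_i\lambda(C_i)$. The measure $\mu$ is the restriction to $\mathcal{B}_{\infty}$ of the outer measure $\mu^{\ast}(A):=\inf\{\sum_{n}\mathrm{vol}(\mathscr{C}_{n}) : \mathscr{C}_{n}\in\mathcal{F}(\mathcal{B},\lambda),\ A\subset\bigcup_{n}\mathscr{C}_{n}\}$ ($\inf\varnothing=\infty$). *)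

From HB Require Import structures.
From mathcomp Require Import all_boot all_order all_algebra.
From mathcomp Require Import all_classical all_reals all_analysis.
Set Implicit Arguments. Unset Strict Implicit. Unset Printing Implicit Defensive.
Import Order.TTheory GRing.Theory Num.Theory.
Local Open Scope classical_set_scope.
Local Open Scope ring_scope.

(* R here is Borel-measurable (measurableTypeR R = sigma-algebra generated by
   half-open intervals), and lebesgue_measure is the Lebesgue measure on it. *)

Definition cylinders (R : realType) : set (set (nat -> R)) :=
  [set A | exists (m : nat) (C : nat -> set R),
     (forall i, measurable (C i)) /\
     A = [set x | forall i, (i < m)%N -> C i (x i)]].

Definition B_inf (R : realType) : set (set (nat -> R)) :=
  smallest (sigma_algebra setT) (@cylinders R).

Definition rect (R : realType) (C : nat -> set R) : set (nat -> R) :=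
  [set x | forall i, C i (x i)].

Definition finite_rect (R : realType) (C : nat -> set R) (v : R) : Prop :=
  (forall i, measurable (C i)) /\
  ((fun n : nat => (\prod_(i < n) lebesgue_measure (C i))%E) @ \oo --> v%:E).

(* The outer measure mu^*(A) = inf { sum_n vol(C_n) : A covered by countably
   many finite rectangles }, with inf of the empty set = +oo. *)
Definition mu_star (R : realType) (A : set (nat -> R)) : \bar R :=
  ereal_inf [set s | exists (C : nat -> nat -> set R) (v : nat -> R),
     (forall n, finite_rect (C n) (v n)) /\
     A `<=` \bigcup_n rect (C n) /\
     s = (\sum_(0 <= n <oo) (v n)%:E)%E].

Definition semi_finite (R : realType) (T : Type) (M : set (set T))
    (m : set T -> \bar R) : Prop :=
  forall A, M A -> m A = +oo%E ->
    exists B, M B /\ B `<=` A /\ (0 < m B)%E /\ (m B < +oo)%E.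

From HB Require Import structures.
From mathcomp Require Import all_boot all_order all_algebra.
From mathcomp Require Import all_classical all_reals all_analysis.
From mathcomp Require Import lra.
Set Implicit Arguments. Unset Strict Implicit. Unset Printing Implicit Defensive.
Import Order.TTheory GRing.Theory Num.Theory.
Import numFieldNormedType.Exports.
Local Open Scope ring_scope.
Local Open Scope classical_set_scope.

(* Let A = prod_i A_i with A_i = [0, 1/2] for odd i and A_i = R for even i.
   No countable family of finite rectangles covers A: in coordinate i a point
   of A can avoid the countably many null i-th sides, and, for even i, the
   i-th side of the (i/2)-th rectangle, which has finite measure whenever
   that rectangle has no null side.  Hence mu(A) = +oo.  On the other hand,
   if a finite rectangle has positive volume then lambda(C_i) -> 1, so
   shrinking infinitely many sides to measure 1/2 kills the volume: every
   finite rectangle meets A in a set of volume 0, and every subset of A has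
   outer measure 0 or +oo. *)

Section real_products.
Variable R : realType.
Implicit Types (c e q : nat -> R) (r v : R).

Lemma cvg_prod_factor1 c v : v != 0 ->
  (fun n => \prod_(i < n) c i) @ \oo --> v -> c @ \oo --> (1 : R).
Proof.
move=> v0 Pv; set P := fun n => _ in Pv.
have : (fun n => P n.+1 / P n) @ \oo --> (1 : R).
  by rewrite -(divff v0); apply: cvgM; [rewrite cvg_shiftS|exact: cvgV].
apply: cvg_trans; apply: near_eq_cvg; near=> n.
rewrite /P big_ord_recr /= mulrAC divff ?mul1r //.
by near: n; exact: cvgr_neq0 Pv v0.
Unshelve. all: by end_near. Qed.

Lemma prod_cvg0_pairs_le q r : (forall i, 0 <= q i <= 1) -> r < 1 ->
  (\forall k \near \oo, q k * q k.+1 <= r) ->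
  (fun n => \prod_(i < n) q i) @ \oo --> 0.
Proof.
move=> q01 r1 qr; set P := fun n => _.
have q0 i : 0 <= q i by case/andP: (q01 i).
have P0 n : 0 <= P n by apply: prodr_ge0.
have PS n : P n.+1 = P n * q n by rewrite /P big_ord_recr.
have Pcvg : cvgn P.
  apply: nonincreasing_is_cvgn; last by exists 0 => _ [n _ <-].
  by apply/nonincreasing_seqP => n; rewrite PS ler_piMr //; case/andP: (q01 n).
have L0 : 0 <= limn P by apply: limr_ge => //; near=> n.
have Lr : limn P <= r * limn P.
  have P2 : (fun n => P (n + 2)%N) @ \oo --> limn P by rewrite (cvg_shiftn 2 P).
  have rP : (fun n => r * P n) @ \oo --> r * limn P by apply: cvgMr.
  rewrite -(cvg_lim _ rP) // -(cvg_lim _ P2) //.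
  apply: ler_lim; [exact: cvgP P2|exact: cvgP rP|].
  near=> n; rewrite addn2 !PS -mulrA mulrC ler_wpM2r //.
  by near: n.
have -> : 0 = limn P by apply/eqP; rewrite eq_le L0 /=; nra.
exact: Pcvg.
Unshelve. all: by end_near. Qed.

Lemma prod_le_half_odd_cvg0 c e v : (forall i, 0 <= e i <= c i) ->
  (forall i, odd i -> e i <= 2^-1) ->
  (fun n => \prod_(i < n) c i) @ \oo --> v ->
  (fun n => \prod_(i < n) e i) @ \oo --> 0.
Proof.
move=> ec e_odd Pv.
have e0 i : 0 <= e i by case/andP: (ec i).
have c0 i : 0 <= c i by case/andP: (ec i) => /le_trans; apply.
have [v0|v0] := eqVneq v 0.
  rewrite v0 in Pv; apply: (squeeze_cvgr _ (cvg_cst 0) Pv).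
  by near=> n; rewrite prodr_ge0 //= ler_prod.
have c_gt0 i : 0 < c i.
  rewrite lt0r c0 andbT; apply: contra_neq v0 => ci0.
  have P0 : (fun n => \prod_(i < n) c i) @ \oo --> 0.
    apply: cvg_near_cst; exists i.+1 => // n /= i_n.
    by rewrite (bigD1 (Ordinal i_n)) //= ci0 mul0r.
  by rewrite -(cvg_lim _ Pv) // (cvg_lim _ P0).
(* Writing e = c * q, all q_i lie in [0, 1], and q_i <= 2/3 at odd i as soon
   as c_i > 3/4, which eventually holds because c_i -> 1. *)
pose q i := e i / c i.
have q01 i : 0 <= q i <= 1.
  by rewrite divr_ge0 //= ler_pdivrMr // mul1r; case/andP: (ec i).
have q_odd i : odd i -> 3/4 < c i -> q i <= 2/3.
  by move=> /e_odd ei ci; rewrite ler_pdivrMr //; lra.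
have -> : (fun n => \prod_(i < n) e i) =
          (fun n => \prod_(i < n) c i * \prod_(i < n) q i).
  apply/funext => n; rewrite -big_split; apply: eq_bigr => i _.
  by rewrite /= mulrC divfK // gt_eqF.
suff Q0 : (fun n => \prod_(i < n) q i) @ \oo --> 0.
  by have := cvgM Pv Q0; rewrite mulr0; apply.
apply: (@prod_cvg0_pairs_le _ (2/3)) => //; first by lra.
have c34 : 3/4 < (1 : R) by lra.
have [N _ cN] := cvgr_gt 1 (cvg_prod_factor1 v0 Pv) _ c34.
exists N => // k /= Nk; have ck := cN _ Nk; have ck1 := cN _ (leqW Nk).
have [/andP[q0k q1k] /andP[q0k1 q1k1]] := (q01 k, q01 k.+1).
case: (boolP (odd k)) => [ok|ek].
  by rewrite -[2/3]mulr1 ler_pM // q_odd.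
by rewrite -[2/3]mul1r ler_pM // q_odd //= ek.
Unshelve. all: by end_near.
Qed.

End real_products.

Section outer_measure.
Variable R : realType.
Implicit Types (A : set (nat -> R)) (C : nat -> set R) (v : R).

Lemma cvg_prod_fine (x : nat -> \bar R) v : (forall i, x i \is a fin_num) ->
  (fun n => \prod_(i < n) x i)%E @ \oo --> v%:E <->
  (fun n => \prod_(i < n) fine (x i)) @ \oo --> v.
Proof.
move=> xfin.
rewrite (_ : (fun n => _) = (fun n => (\prod_(i < n) fine (x i))%:E)).
  by rewrite fine_cvgP; split => [[]//|]; split => //; exact: nearW.
by apply/funext => n; rewrite -prodEFin; apply: eq_bigr => i _; rewrite fineK.
Qed.

Lemma B_inf_rect C : (forall i, measurable (C i)) -> B_inf (rect C).
Proof.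
move=> mC; have -> : rect C = \bigcap_m [set x | forall i, (i < m)%N -> C i (x i)].
  apply/seteqP; split => [x xC m _ i _ | x xC i]; first exact: xC.
  exact: xC i.+1 I i (ltnSn i).
apply: (@bigcapT_measurable _ (g_sigma_algebraType (@cylinders R))) => m.
by apply: sub_gen_smallest; exists m, C.
Qed.

(* Since 0 * +oo = 0 in \bar R, a finite rectangle may have sides of infinite
   measure, but only if it also has a null side. *)
Lemma finite_rect_null_or_finite C v : finite_rect C v ->
  (exists j, lebesgue_measure (C j) = 0%E) \/
  (forall i, (lebesgue_measure (C i) < +oo)%E).
Proof.
move=> [_ vol].
have [|no_null] := pselect (exists j, lebesgue_measure (C j) = 0%E); first by left.
right => i; rewrite ltey; apply/negP => /eqP Ci_oo.
have side_gt0 k : (0 < lebesgue_measure (C k))%E.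
  by rewrite lt0e measure_ge0 andbT; apply/eqP => Ck0; apply: no_null; exists k.
have prod_gt0 n : (0 < \prod_(k < n) lebesgue_measure (C k))%E.
  by elim: n => [|n IH]; rewrite ?big_ord0 ?lte01 // big_ord_recr mule_gt0.
have prod_oo n : (i < n)%N -> (\prod_(k < n) lebesgue_measure (C k))%E = +oo%E.
  elim: n => // n IH; rewrite ltnS leq_eqVlt big_ord_recr /=.
  case/orP => [/eqP <-|/IH ->].
    by rewrite Ci_oo gt0_muley ?prod_gt0.
  by rewrite gt0_mulye ?side_gt0.
have [N _ prod_fin] := cvg_is_fine vol.
have := prod_fin (maxn N i.+1) (leq_maxl _ _).
by rewrite /= prod_oo // leq_max ltnSn orbT.
Qed.

Lemma mu_star_le_cover A (C_ : nat -> nat -> set R) (v_ : nat -> R) :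
  (forall n, finite_rect (C_ n) (v_ n)) -> A `<=` \bigcup_n rect (C_ n) ->
  (mu_star A <= \sum_(0 <= n <oo) (v_ n)%:E)%E.
Proof. by move=> Cv AC; apply: ereal_inf_lbound; exists C_, v_. Qed.

Lemma mu_star_fin_cover A : (mu_star A < +oo)%E ->
  exists (C_ : nat -> nat -> set R) (v_ : nat -> R),
    (forall n, finite_rect (C_ n) (v_ n)) /\ A `<=` \bigcup_n rect (C_ n).
Proof.
apply: contraPP => no_cover; rewrite /mu_star (_ : [set s | _] = set0).
  by rewrite ereal_inf0 ltxx.
apply/seteqP; split => // s [C_ [v_ [Cv [AC _]]]].
by apply: no_cover; exists C_, v_.
Qed.

End outer_measure.

Lemma exists_notin_measure_lt d (T : measurableType d) (R : realType)
    (mu : {measure set T -> \bar R}) (S U : set T) :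
  measurable S -> measurable U -> (mu S < mu U)%E -> exists y, U y /\ ~ S y.
Proof.
move=> mS mU; apply: contra_ltP => no_y; apply: le_measure; rewrite ?inE //.
by move=> y Uy; apply: contrapT => Sy; apply: no_y; exists y.
Qed.

Section alternating_rect.
Variable R : realType.
Implicit Types (B : set (nat -> R)) (C : nat -> set R) (v : R).

Definition alternating_side (i : nat) : set R :=
  if odd i then `[0, 2^-1] else setT.

Lemma measurable_alternating_side i : measurable (alternating_side i).
Proof. by rewrite /alternating_side; case: odd. Qed.

Lemma lebesgue_alternating_side i : lebesgue_measure (alternating_side i) =
  if odd i then (2^-1)%:E else +oo%E.
Proof.
rewrite /alternating_side; case: odd.
  by rewrite lebesgue_measure_itv /= lte_fin invr_gt0 ltr0n oppr0 adde0.
by rewrite -set_itvNyy lebesgue_measure_itv.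
Qed.

Lemma finite_rect_setI_alternating C v : finite_rect C v ->
  finite_rect (fun i => C i `&` alternating_side i) 0.
Proof.
move=> Cv; have [mC vol] := Cv.
have mCA i : measurable (C i `&` alternating_side i).
  exact: measurableI (mC i) (measurable_alternating_side i).
have leC i : (lebesgue_measure (C i `&` alternating_side i) <=
              lebesgue_measure (C i))%E.
  by apply: le_measure; rewrite ?inE; [exact: mCA|exact: mC|exact: subIsetl].
split => //; case: (finite_rect_null_or_finite Cv) => [[j Cj0]|C_fin].
  apply: cvg_near_cst; exists j.+1 => // n /= jn.
  rewrite (bigD1 (Ordinal jn)) //= (_ : lebesgue_measure _ = 0%E) ?mul0e //.
  by apply/eqP; rewrite -measure_le0 -Cj0 leC.
have finC i : lebesgue_measure (C i) \is a fin_num.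
  by rewrite ge0_fin_numE ?measure_ge0.
have finCA i : lebesgue_measure (C i `&` alternating_side i) \is a fin_num.
  by rewrite ge0_fin_numE ?measure_ge0 // (le_lt_trans (leC i)).
apply/(cvg_prod_fine _ finCA); move/(cvg_prod_fine _ finC): vol => vol.
refine (prod_le_half_odd_cvg0 (c := fun i => fine (lebesgue_measure (C i)))
  (e := fun i => fine (lebesgue_measure (C i `&` alternating_side i))) _ _ vol).
- move=> i; rewrite /= fine_ge0 ?measure_ge0 //=.
  exact: fine_le (finCA i) (finC i) (leC i).
move=> i odd_i; rewrite -lee_fin fineK //.
have <- : lebesgue_measure (alternating_side i) = (2^-1)%:E.
  by rewrite lebesgue_alternating_side odd_i.
apply: le_measure; rewrite ?inE; first exact: mCA.
  exact: measurable_alternating_side.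
exact: subIsetr.
Qed.

Lemma mu_star_alternating_rect : mu_star (rect alternating_side) = +oo%E.
Proof.
apply/eqP; rewrite eq_le leey /= leNgt; apply/negP.
move=> /mu_star_fin_cover [C_ [v_ [Cv cover]]].
pose null_part i := \bigcup_n
  (if lebesgue_measure (C_ n i) == 0%E then C_ n i else set0).
pose diag_part i :=
  if ~~ odd i && (lebesgue_measure (C_ i./2 i) < +oo)%E then C_ i./2 i else set0.
have mC n i : measurable (C_ n i) by have [] := Cv n.
have m_null i : measurable (null_part i).
  by apply: bigcup_measurable => n _; case: ifP.
have m_diag i : measurable (diag_part i) by rewrite /diag_part; case: ifP.
have null0 i : lebesgue_measure (null_part i) = 0%E.
  apply/negligibleP; first exact: m_null.
  apply: negligible_bigcup => n.
  case: ifPn => [/eqP C0|_]; last exact: negligible_set0.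
  by apply/negligibleP; [exact: mC|exact: C0].
have avoid_lt i : (lebesgue_measure (diag_part i `|` null_part i) <
                   lebesgue_measure (alternating_side i))%E.
  rewrite (@measureU0 _ _ _ lebesgue_measure _ _ (m_diag i) (m_null i) (null0 i)).
  rewrite lebesgue_alternating_side /diag_part; case: odd => /=.
    by rewrite measure0 lte_fin invr_gt0.
  by case: ifP => // _; rewrite measure0.
have [x xP] := choice (fun i =>
  @exists_notin_measure_lt _ _ _ lebesgue_measure _ _
    (measurableU _ _ (m_diag i) (m_null i)) (measurable_alternating_side i)
    (avoid_lt i)).
have [n _ xC] := cover x (fun i => (xP i).1).
case: (finite_rect_null_or_finite (Cv n)) => [[j Cj0]|C_fin].
  by apply: (xP j).2; right; exists n => //; rewrite Cj0 eqxx; exact: xC.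
apply: (xP n.*2).2; left; rewrite /diag_part odd_double doubleK C_fin.
exact: xC.
Qed.

Lemma mu_star_sub_alternating_rect B : B `<=` rect alternating_side ->
  (mu_star B < +oo)%E -> (mu_star B <= 0)%E.
Proof.
move=> BA /mu_star_fin_cover [C_ [v_ [Cv BC]]].
apply: le_trans (mu_star_le_cover (fun n => finite_rect_setI_alternating (Cv n)) _) _.
  move=> x Bx; have [n _ xC] := BC x Bx.
  by exists n => // i; split; [exact: xC|exact: BA].
by rewrite eseries0.
Qed.

End alternating_rect.

Theorem propositionA3 (R : realType) :
  ~ @semi_finite R (nat -> R) (@B_inf R) (@mu_star R).
Proof.
move=> /(_ _ (B_inf_rect (@measurable_alternating_side R))
          (mu_star_alternating_rect R)) [B [_ [BA [B_gt0 B_fin]]]].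
by have := mu_star_sub_alternating_rect BA B_fin; rewrite leNgt B_gt0.
Qed.
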